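(* Let $(\mathcal A,\le_{\mathcal A},\vee,\wedge,\bot,\top)$ be a complete lattice with monotone maps $\alpha:\mathcal Q\to\mathcal A$ and $\gamma:\mathcal A\to\mathcal Q$ forming a Galois embedding. Then the following are equivalent: (1) $\mathcal A$ is a well-structured abstract domain; (2) for every $a\in\mathcal A$, every family $\rho_i\in\mathcal D(\mathcal H_V)$ and reals $x_i>0$ ($i=1,2,\dots$) with $\sum_i x_i\rho_i\in\mathcal D(\mathcal H_V)$: $\sum_i x_i\rho_i\in\gamma(a)$ iff $\rho_i\in\gamma(a)$ for all $i$; (3) for every $a\in\mathcal A$, the set $\gamma(a)\subseteq\mathcal D(\mathcal H_V)$ is (i) convex; (ii) an $\omega$-cpo: if $\rho_i\in\gamma(a)$ and $\rho_i\sqsubseteq\rho_{i+1}$ for all $i\ge1$ then $\bigsqcup_i\rho_i\in\gamma(a)$; (iii) down-closed: $\rho\sqsubseteq\sigma$ and $\sigma\in\gamma(a)$ imply $\rho\in\gamma(a)$; (iv) closed under positive scalar multiplication: if $\rho\in\gamma(a)$, $x>0$ and $x\rho\in\mathcal D(\mathcal H_V)$ then $x\rho\in\gamma(a)$.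
   Context: Fix a finite set $V$ of quantum variables, each a qubit with state space $\mathcal H_q\cong\mathbb C^2$; $\mathcal H_V=\bigotimes_{q\in V}\mathcal H_q$. $\mathcal D(\mathcal H_V)$ is the set of partial density operators on $\mathcal H_V$ (positive operators of trace at most $1$), ordered by the Löwner order $\sqsubseteq$ ($A\sqsubseteq B$ iff $B-A$ is positive); $\bigsqcup$ denotes least upper bound in this order. The concrete domain is $\mathcal Q=2^{\mathcal D(\mathcal H_V)}$ ordered by inclusion. For posets $C,A$ and monotone $\alpha:C\to A$, $\gamma:A\to C$, $(\alpha,\gamma)$ is a Galois connection if $c\le_C\gamma(a)\iff\alpha(c)\le_A a$ for all $c,a$, and a Galois embedding if moreover $\alpha\circ\gamma=\mathrm{id}_A$. A complete lattice $(\mathcal A,\le_{\mathcal A},\vee,\wedge,\bot,\top)$ with monotone $\alpha:\mathcal Q\to\mathcal A$, $\gamma:\mathcal A\to\mathcal Q$ is a well-structured abstract domain if (a) $(\alpha,\gamma)$ is a Galois embedding, and (b) for any family $\rho_i\in\mathcal D(\mathcal H_V)$ and reals $x_i>0$ ($i=1,2,\dots$) with $\sum_i x_i\rho_i\in\mathcal D(\mathcal H_V)$, $\alpha(\sum_i x_i\rho_i)=\bigvee_i\alpha(\rho_i)$, where $\alpha(\rho)$ abbreviates $\alpha(\{\rho\})$. *)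

From mathcomp Require Import all_boot all_order all_algebra.
From mathcomp Require Export complex reals classical_sets.
Import Order.TTheory GRing.Theory Num.Theory.
Set Implicit Arguments. Unset Strict Implicit. Unset Printing Implicit Defensive.
Local Open Scope ring_scope.
Local Open Scope complex_scope.
Local Open Scope classical_set_scope.

(* The scalars: complex numbers R[i] over an arbitrary real field R : realType
   (any realType is a model of the reals).  n = |V| is the number of qubits,
   so H_V = C^(2^n) and operators are 'M[R[i]]_(2^n). *)

Definition psd (R : realType) (n : nat) (A : 'M[R[i]]_(2 ^ n)) : Prop :=
  forall v : 'cV[R[i]]_(2 ^ n),
    0 <= ((map_mx Num.conj v)^T *m A *m v) ord0 ord0.

Definition pdo (R : realType) (n : nat) (A : 'M[R[i]]_(2 ^ n)) : Prop :=
  psd A /\ \tr A <= 1.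

Definition PDO (R : realType) (n : nat) := {A : 'M[R[i]]_(2 ^ n) | pdo A}.

Definition lowner (R : realType) (n : nat) (A B : 'M[R[i]]_(2 ^ n)) : Prop :=
  psd (B - A).

Definition is_lub_pdo (R : realType) (n : nat) (rho : nat -> PDO R n)
  (sigma : PDO R n) : Prop :=
  (forall i, lowner (proj1_sig (rho i)) (proj1_sig sigma)) /\
  (forall tau : PDO R n, (forall i, lowner (proj1_sig (rho i)) (proj1_sig tau)) ->
      lowner (proj1_sig sigma) (proj1_sig tau)).

Definition mx_cvg (R : realType) (n : nat) (u : nat -> 'M[R[i]]_(2 ^ n))
  (L : 'M[R[i]]_(2 ^ n)) : Prop :=
  forall e : R, 0 < e -> exists N : nat, forall k : nat, (N <= k)%N ->
    forall i j, `|u k i j - L i j| < e%:C.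

(* Families rho_i (i = 1, 2, ...): K = Some k is the finite family of the
   k.+1 indices 0..k; K = None is an infinite family indexed by nat. *)
Definition in_fam (K : option nat) (i : nat) : Prop :=
  match K with Some k => (i <= k)%N | None => True end.

Definition wsum_is (R : realType) (n : nat) (K : option nat) (x : nat -> R)
  (rho : nat -> PDO R n) (S : 'M[R[i]]_(2 ^ n)) : Prop :=
  match K with
  | Some k => S = \sum_(i < k.+1) (x i)%:C *: proj1_sig (rho i)
  | None => mx_cvg (fun m => \sum_(i < m) (x i)%:C *: proj1_sig (rho i)) S
  end.

Definition is_lub_in (d : Order.disp_t) (T : porderType d) (P : T -> Prop) (s : T)
  : Prop :=
  (forall y, P y -> (y <= s)%O) /\
  (forall z, (forall y, P y -> (y <= z)%O) -> (s <= z)%O).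

Definition complete_lattice (d : Order.disp_t) (T : porderType d) : Prop :=
  forall P : T -> Prop, exists s, is_lub_in P s.

(* Q = 2^{D(H_V)} ordered by inclusion *)
Definition galois_connection (R : realType) (n : nat) (d : Order.disp_t)
  (A : porderType d) (alpha : set (PDO R n) -> A) (gamma : A -> set (PDO R n))
  : Prop :=
  (forall c c' : set (PDO R n), c `<=` c' -> (alpha c <= alpha c')%O) /\
  (forall a b : A, (a <= b)%O -> gamma a `<=` gamma b) /\
  (forall (c : set (PDO R n)) (a : A), c `<=` gamma a <-> (alpha c <= a)%O).

Definition galois_embedding (R : realType) (n : nat) (d : Order.disp_t)
  (A : porderType d) (alpha : set (PDO R n) -> A) (gamma : A -> set (PDO R n))
  : Prop :=
  galois_connection alpha gamma /\ (forall a : A, alpha (gamma a) = a).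

Definition well_structured (R : realType) (n : nat) (d : Order.disp_t)
  (A : porderType d) (alpha : set (PDO R n) -> A) (gamma : A -> set (PDO R n))
  : Prop :=
  galois_embedding alpha gamma /\
  (forall (K : option nat) (x : nat -> R) (rho : nat -> PDO R n) (S : PDO R n),
     (forall i, in_fam K i -> 0 < x i) ->
     wsum_is K x rho (proj1_sig S) ->
     is_lub_in (fun b => exists2 i, in_fam K i & b = alpha [set rho i])
               (alpha [set S])).

Definition sum_closed (R : realType) (n : nat) (d : Order.disp_t)
  (A : porderType d) (gamma : A -> set (PDO R n)) : Prop :=
  forall (a : A) (K : option nat) (x : nat -> R) (rho : nat -> PDO R n) (S : PDO R n),
    (forall i, in_fam K i -> 0 < x i) ->
    wsum_is K x rho (proj1_sig S) ->
    (gamma a S <-> (forall i, in_fam K i -> gamma a (rho i))).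

Definition convex_pdo (R : realType) (n : nat) (P : set (PDO R n)) : Prop :=
  forall (rho sigma tau : PDO R n) (t : R), P rho -> P sigma -> 0 <= t <= 1 ->
    proj1_sig tau = t%:C *: proj1_sig rho + (1 - t)%:C *: proj1_sig sigma ->
    P tau.

Definition omega_cpo_pdo (R : realType) (n : nat) (P : set (PDO R n)) : Prop :=
  forall (rho : nat -> PDO R n) (sigma : PDO R n),
    (forall i, P (rho i)) ->
    (forall i, lowner (proj1_sig (rho i)) (proj1_sig (rho i.+1))) ->
    is_lub_pdo rho sigma -> P sigma.

Definition down_closed_pdo (R : realType) (n : nat) (P : set (PDO R n)) : Prop :=
  forall rho sigma : PDO R n, lowner (proj1_sig rho) (proj1_sig sigma) ->
    P sigma -> P rho.

Definition scale_closed_pdo (R : realType) (n : nat) (P : set (PDO R n)) : Prop :=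
  forall (rho tau : PDO R n) (x : R), P rho -> 0 < x ->
    proj1_sig tau = x%:C *: proj1_sig rho -> P tau.

From HB Require Import structures.
From mathcomp Require Import all_boot all_order all_algebra.
From mathcomp Require Import complex reals classical_sets.
From mathcomp Require Import ring lra.
Import Order.TTheory GRing.Theory Num.Theory.
Set Implicit Arguments. Unset Strict Implicit. Unset Printing Implicit Defensive.
Local Open Scope ring_scope.
Local Open Scope complex_scope.
Local Open Scope classical_set_scope.

(** Via the Galois embedding, [rho ∈ gamma a] iff [alpha {rho} <= a], so (1) says
   exactly that each [gamma a] contains a positive combination [sum_i x_i rho_i]
   iff it contains every [rho_i], i.e. (2).  From (2), convexity, scaling and
   down-closure are the cases of one or two summands ([sigma = rho + (sigma - rho)]
   for down-closure), and an increasing chain is the series of its increments;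
   the analytic input is that such a chain converges entrywise to its least upper
   bound, which follows by polarization from the monotone convergence of its
   quadratic forms [<v, rho_k v>].  Conversely, from (3) every finite partial sum
   lies in [gamma a] by convexity and scaling, the summands [x_i rho_i] lie
   below the sum, and an infinite sum is the least upper bound of its increasing
   partial sums. *)

(** * Sesquilinear forms and polarization *)

(* The polarization identity, in the shape produced by expanding [sesq] with
   [sesqDl], [sesqDr], [sesqZl] and [sesqZr]. *)
Lemma polar_identity (F : comRingType) (i a b p q : F) : i * i = -1 ->
  2%:R * a = (p + a + (b + q) - p - q)
             - i * (p + i * a + (- i * b + - i * (i * q)) - p - q).
Proof.
move=> i2; apply/eqP; rewrite -subr_eq0; apply/eqP.
transitivity ((i * i + 1) * (a - b - i * q)); first by ring.
by rewrite i2 addNr mul0r.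
Qed.

Section Sesquilinear.
Variables (R : rcfType) (m : nat).
Local Notation C := R[i].
Local Notation M := 'M[C]_m.
Local Notation V := 'cV[C]_m.

Definition sesq (x y : V) (A : M) : C :=
  ((map_mx Num.conj x)^T *m A *m y) ord0 ord0.

Lemma sesqE x y A :
  sesq x y A = \sum_j \sum_l (Num.conj (x j ord0) * y l ord0) * A j l.
Proof.
rewrite /sesq mxE; under eq_bigr => l _ do rewrite mxE big_distrl /=.
rewrite exchange_big /=; apply: eq_bigr => j _; apply: eq_bigr => l _.
by rewrite !mxE mulrAC mulrC !mulrA.
Qed.

Lemma sesq_is_linear x y : linear (sesq x y).
Proof. by move=> c A B; rewrite /sesq mulmxDr mulmxDl -scalemxAr -scalemxAl !mxE. Qed.

HB.instance Definition _ x y :=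
  GRing.isLinear.Build C M C *%R (sesq x y) (sesq_is_linear x y).

Lemma sesqDl x y z A : sesq (x + y) z A = sesq x z A + sesq y z A.
Proof.
rewrite !sesqE -big_split; apply: eq_bigr => j _; rewrite -big_split.
by apply: eq_bigr => l _; rewrite !mxE rmorphD !mulrDl.
Qed.

Lemma sesqDr x y z A : sesq z (x + y) A = sesq z x A + sesq z y A.
Proof.
rewrite !sesqE -big_split; apply: eq_bigr => j _; rewrite -big_split.
by apply: eq_bigr => l _; rewrite !mxE !mulrDr !mulrDl.
Qed.

Lemma sesqZl c x y A : sesq (c *: x) y A = Num.conj c * sesq x y A.
Proof.
rewrite !sesqE mulr_sumr; apply: eq_bigr => j _; rewrite mulr_sumr.
by apply: eq_bigr => l _; rewrite !mxE rmorphM !mulrA.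
Qed.

Lemma sesqZr c x y A : sesq x (c *: y) A = c * sesq x y A.
Proof.
rewrite !sesqE mulr_sumr; apply: eq_bigr => j _; rewrite mulr_sumr.
by apply: eq_bigr => l _; rewrite !mxE; ring.
Qed.

Lemma sesq_delta j l A : sesq (delta_mx j ord0) (delta_mx l ord0) A = A j l.
Proof.
rewrite sesqE (bigD1 j) //= [X in _ + X]big1 => [|j' /negbTE hj]; last first.
  by apply: big1 => l' _; rewrite !mxE hj /= rmorph0 !mul0r.
rewrite addr0 (bigD1 l) //= [X in _ + X]big1 => [|l' /negbTE hl]; last first.
  by rewrite !mxE hl /= mulr0 mul0r.
by rewrite !mxE !eqxx /= rmorph1 !mul1r addr0.
Qed.

Lemma conjC_i : Num.conj ('i : C) = - 'i.
Proof. by apply/eqP; rewrite eq_complex /= oppr0 !eqxx. Qed.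

Lemma sesq_polar x y A :
  2%:R * sesq x y A =
  (sesq (x + y) (x + y) A - sesq x x A - sesq y y A)
  - 'i * (sesq (x + 'i *: y) (x + 'i *: y) A - sesq x x A - sesq y y A).
Proof.
rewrite !sesqDl !sesqDr !sesqZl !sesqZr conjC_i.
by apply: polar_identity; rewrite -expr2 sqr_i.
Qed.

Definition polar_mx (f : V -> C) : M :=
  \matrix_(j, l) (2%:R^-1 *
    ((f (delta_mx j 0 + delta_mx l 0) - f (delta_mx j 0) - f (delta_mx l 0))
     - 'i * (f (delta_mx j 0 + 'i *: delta_mx l 0) - f (delta_mx j 0)
             - f (delta_mx l 0)))).

Lemma polar_mxK A : polar_mx (fun v => sesq v v A) = A.
Proof.
apply/matrixP => j l.
rewrite mxE -(sesq_polar (delta_mx j 0) (delta_mx l 0)) sesq_delta mulrA.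
by rewrite mulVf ?mul1r // pnatr_eq0.
Qed.

Lemma sesq_eq0 A : (forall v, sesq v v A = 0) -> A = 0.
Proof.
move=> h; rewrite -(polar_mxK A); apply/matrixP => j l; rewrite !mxE !h.
by rewrite !subrr mulr0 subrr mulr0.
Qed.

End Sesquilinear.

(** * Limits of complex sequences and of matrices *)

Section ComplexSequences.
Variable R : rcfType.
Local Notation C := R[i].

Definition cvgC (u : nat -> C) (l : C) : Prop :=
  forall e : R, 0 < e -> exists N, forall k, (N <= k)%N -> `|u k - l| < e%:C.

Lemma cvgC_ext u v l : (forall k, u k = v k) -> cvgC u l -> cvgC v l.
Proof. by move=> uv hu e /hu [N hN]; exists N => k /hN; rewrite uv. Qed.

Lemma cvgC_cst c : cvgC (fun=> c) c.
Proof. by move=> e he; exists 0%N => k _; rewrite subrr normr0 ltcR. Qed.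

Lemma cvgCD u v a b : cvgC u a -> cvgC v b -> cvgC (fun k => u k + v k) (a + b).
Proof.
move=> hu hv e he; have he2 : 0 < e / 2%:R by rewrite divr_gt0 ?ltr0n.
have [N1 h1] := hu _ he2; have [N2 h2] := hv _ he2.
exists (maxn N1 N2) => k; rewrite geq_max => /andP [k1 k2].
rewrite opprD addrACA (splitr e) rmorphD; apply: le_lt_trans (ler_normD _ _) _.
exact: ltrD (h1 _ k1) (h2 _ k2).
Qed.

Lemma cvgCM c u a : cvgC u a -> cvgC (fun k => c * u k) (c * a).
Proof.
move=> hu e he; have [r [r0 hc]] : exists r, 0 <= r /\ `|c| = r%:C.
  by eexists; split; last exact: normc_def; apply: sqrtr_ge0.
have hr1 : 0 < r + 1 by rewrite ltr_wpDl.
have [N hN] := hu _ (divr_gt0 he hr1); exists N => k hk.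
rewrite -mulrBr normrM hc; apply: le_lt_trans (ler_wpM2l _ (ltW (hN k hk))) _.
  by rewrite ler0c.
by rewrite -rmorphM ltcR mulrA ltr_pdivrMr // mulrDr mulr1 mulrC ltrDl.
Qed.

Lemma cvgCN u a : cvgC u a -> cvgC (fun k => - u k) (- a).
Proof.
by move=> hu e /hu [N hN]; exists N => k /hN; rewrite -opprD normrN.
Qed.

Lemma cvgCB u v a b : cvgC u a -> cvgC v b -> cvgC (fun k => u k - v k) (a - b).
Proof. by move=> hu /cvgCN; apply: cvgCD. Qed.

Lemma cvgC_sum (I : Type) (r : seq I) (P : pred I) (u : I -> nat -> C) (a : I -> C) :
  (forall i, P i -> cvgC (u i) (a i)) ->
  cvgC (fun k => \sum_(i <- r | P i) u i k) (\sum_(i <- r | P i) a i).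
Proof.
move=> hu; elim: r => [|i r IH].
  by rewrite big_nil; apply: cvgC_ext (cvgC_cst 0) => k; rewrite big_nil.
rewrite big_cons; case: ifP => Pi.
  by apply: cvgC_ext (cvgCD (hu i Pi) IH) => k; rewrite big_cons Pi.
by apply: cvgC_ext IH => k; rewrite big_cons Pi.
Qed.

Lemma normC_lt_ReIm (z : C) (e : R) :
  `|z| < e%:C -> `|complex.Re z| < e /\ `|complex.Im z| < e.
Proof.
rewrite normc_def ltcR => he; split; apply: le_lt_trans he;
  by rewrite -sqrtr_sqr ler_wsqrtr // ?lerDl ?lerDr sqr_ge0.
Qed.

Lemma cvgC_ge0 u a N : cvgC u a -> (forall k, (N <= k)%N -> 0 <= u k) -> 0 <= a.
Proof.
move=> hu hge; have approx (e : R) : 0 < e -> `|complex.Im a| <= e /\ 0 <= complex.Re a + e.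
  move=> /hu [K hK]; have hk := hK _ (leq_maxl K N).
  have := hge _ (leq_maxr K N); rewrite lecE /= => /andP [/eqP ImE ReE].
  have [hRe hIm] := normC_lt_ReIm hk; split.
    by move: hIm; rewrite raddfB /= ImE sub0r normrN => /ltW.
  by move: hRe; rewrite raddfB /= ltr_distl => /andP [_ ?]; lra.
rewrite lecE /=; apply/andP; split.
  by rewrite -normr_le0; apply/ler_addgt0Pr => e /approx []; rewrite add0r.
by apply/ler_addgt0Pr => e /approx [].
Qed.

End ComplexSequences.

Section LownerOrder.
Variables (R : realType) (n : nat).
Local Notation M := 'M[R[i]]_(2 ^ n).

Lemma psd_tr_ge0 (A : M) : psd A -> 0 <= \tr A.
Proof. by move=> hA; apply: sumr_ge0 => j _; rewrite -sesq_delta; apply: hA. Qed.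

Lemma psdD (A B : M) : psd A -> psd B -> psd (A + B).
Proof. by move=> hA hB v; rewrite -/(sesq v v _) linearD addr_ge0 //; [apply: hA | apply: hB]. Qed.

Lemma psdZ (c : R[i]) (A : M) : 0 <= c -> psd A -> psd (c *: A).
Proof. by move=> hc hA v; rewrite -/(sesq v v _) linearZ mulr_ge0 //; apply: hA. Qed.

Lemma lowner_refl (A : M) : lowner A A.
Proof. by move=> v; rewrite -/(sesq v v _) subrr linear0. Qed.

Lemma lowner_trans (A B D : M) : lowner A B -> lowner B D -> lowner A D.
Proof.
rewrite /lowner => hAB hBD.
have -> : D - A = (D - B) + (B - A) by rewrite addrA subrK.
exact: psdD.
Qed.

Lemma lowner_anti (A B : M) : lowner A B -> lowner B A -> A = B.
Proof.
move=> hAB hBA; apply/eqP; rewrite -subr_eq0; apply/eqP/sesq_eq0 => v.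
apply/eqP; rewrite eq_le -oppr_ge0 -linearN opprB; apply/andP; split.
  exact: hAB v.
exact: hBA v.
Qed.

Lemma lowner_tr (A B : M) : lowner A B -> \tr A <= \tr B.
Proof. by move=> /psd_tr_ge0; rewrite linearB subr_ge0. Qed.

Lemma pdo_lowner (A B : M) : psd A -> lowner A B -> pdo B -> pdo A.
Proof. by move=> hA hAB [_ hB]; split => //; apply: le_trans (lowner_tr hAB) hB. Qed.

Lemma pdo_subr (A B : M) : pdo A -> pdo B -> lowner A B -> pdo (B - A).
Proof.
move=> [hA _] [_ trB] hAB; split => //; apply: le_trans trB.
by rewrite linearB lerBlDr lerDl psd_tr_ge0.
Qed.

Lemma pdo_conv (A B : M) (t : R) : pdo A -> pdo B -> 0 <= t <= 1 ->
  pdo (t%:C *: A + (1 - t)%:C *: B).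
Proof.
move=> [hA trA] [hB trB] /andP [t0 t1].
have t0' : 0 <= t%:C by rewrite ler0c.
have t1' : 0 <= (1 - t)%:C by rewrite ler0c subr_ge0.
split; first by apply: psdD; apply: psdZ.
rewrite linearD !linearZ /=; apply: le_trans (_ : t%:C * 1 + (1 - t)%:C * 1 <= 1).
  by apply: lerD; apply: ler_wpM2l.
by rewrite !mulr1 -rmorphD addrC subrK.
Qed.

End LownerOrder.

Lemma eventually_forall_fin (T : finType) (P : T -> nat -> Prop) :
  (forall t, exists N, forall k, (N <= k)%N -> P t k) ->
  exists N, forall t k, (N <= k)%N -> P t k.
Proof.
move=> h; suff [N hN] : exists N, forall t, t \in enum T -> forall k, (N <= k)%N -> P t k.
  by exists N => t; apply: hN; rewrite mem_enum.
elim: (enum T) => [|t s [N2 IH]]; first by exists 0%N.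
have [N1 h1] := h t; exists (maxn N1 N2) => t'; rewrite in_cons.
by case/orP => [/eqP -> | /IH ht] k; rewrite geq_max => /andP [k1 k2];
  [apply: h1 | apply: ht].
Qed.

Section EntrywiseLimits.
Variables (R : realType) (n : nat).
Local Notation M := 'M[R[i]]_(2 ^ n).
Implicit Types (u : nat -> M) (L B : M).

Lemma mx_cvgP u L : mx_cvg u L <-> forall j l, cvgC (fun k => u k j l) (L j l).
Proof.
split=> [hu j l e /hu [N hN] | hu e he]; first by exists N => k /hN; apply.
have [N hN] := eventually_forall_fin (fun t : 'I__ * 'I__ => hu t.1 t.2 e he).
by exists N => k hk j l; apply: (hN (j, l)).
Qed.

Lemma mx_cvg_shift u L : mx_cvg u L -> mx_cvg (fun k => u k.+1) L.
Proof. by move=> hu e /hu [N hN]; exists N => k hk; apply/hN/leqW. Qed.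

Lemma mx_cvg_sesq u L v w :
  mx_cvg u L -> cvgC (fun k => sesq v w (u k)) (sesq v w L).
Proof.
move=> /mx_cvgP hu; rewrite sesqE; apply: cvgC_ext (fun k => esym (sesqE v w (u k))) _.
by apply: cvgC_sum => j _; apply: cvgC_sum => l _; apply/cvgCM/hu.
Qed.

Lemma mx_cvg_tr u L : mx_cvg u L -> cvgC (fun k => \tr (u k)) (\tr L).
Proof. by move=> /mx_cvgP hu; apply: cvgC_sum => j _; apply: hu. Qed.

Lemma mx_cvg_lowner_ub u L B N :
  mx_cvg u L -> (forall k, (N <= k)%N -> lowner (u k) B) -> lowner L B.
Proof.
move=> hu hB v; rewrite -/(sesq v v _) linearB; apply: (cvgC_ge0 (N := N)).
  exact: cvgCB (cvgC_cst _) (mx_cvg_sesq v v hu).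
by move=> k /hB /(_ v); rewrite -/(sesq v v _) linearB.
Qed.

Lemma mx_cvg_lowner_lb u L B N :
  mx_cvg u L -> (forall k, (N <= k)%N -> lowner B (u k)) -> lowner B L.
Proof.
move=> hu hB v; rewrite -/(sesq v v _) linearB; apply: (cvgC_ge0 (N := N)).
  exact: cvgCB (mx_cvg_sesq v v hu) (cvgC_cst _).
by move=> k /hB /(_ v); rewrite -/(sesq v v _) linearB.
Qed.

Lemma mx_cvg_pdo u L : mx_cvg u L -> (forall k, pdo (u k)) -> pdo L.
Proof.
move=> hu hp; split.
  move=> v; apply: (cvgC_ge0 (N := 0%N) (mx_cvg_sesq v v hu)) => k _.
  exact: (hp k).1 v.
rewrite -subr_ge0; apply: (cvgC_ge0 (N := 0%N) (cvgCB (cvgC_cst 1) (mx_cvg_tr hu))).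
by move=> k _; rewrite subr_ge0; apply: (hp k).2.
Qed.

End EntrywiseLimits.

(** * Increasing chains of partial density operators *)

Lemma nondecreasing_cvgC_sup (R : realType) (q : nat -> R) (b : R) :
  {homo q : i j / (i <= j)%N >-> i <= j} -> (forall k, q k <= b) ->
  cvgC (fun k => (q k)%:C) (sup (range q))%:C.
Proof.
move=> q_mono q_ub e he.
have hs : has_sup (range q) by split; [exists (q 0%N), 0%N | exists b => _ [k _ <-]].
have [_ [N _ <-] hN] := sup_adherent he hs; exists N => k hk.
have qk_le : q k <= sup (range q) by apply: sup_upper_bound => //; exists k.
rewrite -rmorphB normc_def /= expr0n /= addr0 sqrtr_sqr ltcR.
by rewrite ler0_norm ?subr_le0 // opprB ltrBlDr -ltrBlDl (lt_le_trans hN) ?q_mono.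
Qed.

Lemma mx_cvg_polar (R : realType) (n : nat) (u : nat -> 'M[R[i]]_(2 ^ n))
    (f : 'cV[R[i]]_(2 ^ n) -> R[i]) :
  (forall w, cvgC (fun k => sesq w w (u k)) (f w)) -> mx_cvg u (polar_mx f).
Proof.
move=> hf; apply/mx_cvgP => j l; rewrite mxE.
pose q k v := sesq v v (u k); pose x : 'cV[R[i]]_(2 ^ n) := delta_mx j 0.
pose y : 'cV[R[i]]_(2 ^ n) := delta_mx l 0.
apply: (@cvgC_ext _ (fun k => 2%:R^-1 * ((q k (x + y) - q k x - q k y)
          - 'i * (q k (x + 'i *: y) - q k x - q k y)))).
  by move=> k; rewrite -[in RHS](polar_mxK (u k)) mxE.
apply/cvgCM/cvgCB; [|apply: cvgCM]; (apply: cvgCB; first apply: cvgCB); exact: hf.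
Qed.

Section IncreasingSequences.
Variables (R : realType) (n : nat) (rho : nat -> PDO R n) (sigma : PDO R n).
Local Notation r k := (proj1_sig (rho k)).
Hypothesis rho_incr : forall k, lowner (r k) (r k.+1).
Hypothesis sigma_lub : is_lub_pdo rho sigma.

Lemma lowner_incr i k : (i <= k)%N -> lowner (r i) (r k).
Proof.
elim: k => [|k IH]; first by rewrite leqn0 => /eqP ->; apply: lowner_refl.
rewrite leq_eqVlt => /orP [/eqP -> | /IH hi]; first exact: lowner_refl.
exact: lowner_trans hi (rho_incr k).
Qed.

Lemma sesq_incr_cvg w :
  cvgC (fun k => sesq w w (r k)) (sup (range (fun k => complex.Re (sesq w w (r k)))))%:C.
Proof.
pose q k := complex.Re (sesq w w (r k)).
have qE k : sesq w w (r k) = (q k)%:C.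
  rewrite /q; move: ((proj2_sig (rho k)).1 w); rewrite -/(sesq _ _ _).
  by case: (sesq w w (r k)) => a b; rewrite lecE /= => /andP [/eqP ->].
have q_le i k : lowner (r i) (r k) -> q i <= q k.
  by move=> /(_ w); rewrite -/(sesq _ _ _) linearB /= !qE -rmorphB ler0c subr_ge0.
apply: cvgC_ext (fun k => esym (qE k)) _.
apply: (@nondecreasing_cvgC_sup _ _ (complex.Re (sesq w w (proj1_sig sigma)))).
  by move=> i k /lowner_incr /q_le.
move=> k; have := sigma_lub.1 k w; rewrite -/(sesq _ _ _) linearB /= qE subr_ge0.
by rewrite lecE => /andP [].
Qed.

(* The chain converges entrywise to some [L] (polarization of the limits of its
   quadratic forms); limits preserve [⊑], so [L] is an upper bound lying below
   [sigma], and leastness of [sigma] gives [sigma ⊑ L]. *)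
Lemma incr_lub_mx_cvg : mx_cvg (fun k => r k) (proj1_sig sigma).
Proof.
have hL := mx_cvg_polar sesq_incr_cvg.
set L := polar_mx _ in hL.
have pdoL : pdo L by apply: mx_cvg_pdo hL _ => k; apply: proj2_sig.
have ubL i : lowner (r i) L by apply: mx_cvg_lowner_lb hL (@lowner_incr i).
suff <- : L = proj1_sig sigma by [].
apply: lowner_anti.
  by apply: mx_cvg_lowner_ub hL (fun k _ => sigma_lub.1 k).
exact: sigma_lub.2 (exist _ L pdoL) ubL.
Qed.

End IncreasingSequences.

Section GaloisEmbedding.
Variables (R : realType) (n : nat) (d : Order.disp_t) (A : porderType d).
Variables (alpha : set (PDO R n) -> A) (gamma : A -> set (PDO R n)).
Hypothesis embedding : galois_embedding alpha gamma.

Lemma gamma_memE a S : gamma a S <-> (alpha [set S] <= a)%O.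
Proof.
have [[_ [_ gc]] _] := embedding; rewrite -gc.
by split=> [hS _ -> | /(_ S erefl)].
Qed.

Lemma well_structured_sum_closedP :
  well_structured alpha gamma <-> sum_closed gamma.
Proof.
split=> [[_ lub] a K x rho S x_gt0 hS | hsc]; last first.
  split=> // K x rho S x_gt0 hS; split=> [_ [i Ki ->] | b ub]; apply/gamma_memE.
    by apply: (hsc _ K x rho S x_gt0 hS).1 i Ki; apply/gamma_memE.
  by apply: (hsc b K x rho S x_gt0 hS).2 => i Ki; apply/gamma_memE/ub; exists i.
have [ub least] := lub K x rho S x_gt0 hS; split.
  by move=> /gamma_memE Sa i Ki; apply/gamma_memE/(le_trans _ Sa)/ub; exists i.
by move=> rho_a; apply/gamma_memE/least => _ [i Ki ->]; apply/gamma_memE/rho_a.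
Qed.

End GaloisEmbedding.

Definition pair_fam (R : realType) (n : nat) (r1 r2 : PDO R n) : nat -> PDO R n :=
  fun i => if i is 0%N then r1 else r2.

Definition increments (R : realType) (n : nat) (rho : nat -> PDO R n)
    (rho_incr : forall k, lowner (proj1_sig (rho k)) (proj1_sig (rho k.+1))) :
    nat -> PDO R n :=
  fun i => if i is k.+1
    then exist _ _ (pdo_subr (proj2_sig (rho k)) (proj2_sig (rho k.+1)) (rho_incr k))
    else rho 0%N.

Section SumClosedConditions.
Variables (R : realType) (n : nat) (d : Order.disp_t) (A : porderType d).
Variable gamma : A -> set (PDO R n).
Hypothesis hsc : sum_closed gamma.

Lemma sum_closed_pair a (x : nat -> R) (r1 r2 S : PDO R n) :
  0 < x 0%N -> 0 < x 1%N ->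
  proj1_sig S = (x 0%N)%:C *: proj1_sig r1 + (x 1%N)%:C *: proj1_sig r2 ->
  (gamma a S <-> gamma a r1 /\ gamma a r2).
Proof.
move=> x0 x1 hS.
have x_gt0 i : in_fam (Some 1%N) i -> 0 < x i by case: i => [|[|]].
have hw : wsum_is (Some 1%N) x (pair_fam r1 r2) (proj1_sig S).
  by rewrite /= big_ord_recr big_ord1.
have [Sa ra] := hsc a x_gt0 hw.
by split=> [/Sa h | [h1 h2]]; [split; [apply: (h 0%N) | apply: (h 1%N)] | apply: ra => -[]].
Qed.

Lemma sum_closed_add a (r1 r2 S : PDO R n) :
  proj1_sig S = proj1_sig r1 + proj1_sig r2 ->
  (gamma a S <-> gamma a r1 /\ gamma a r2).
Proof. by move=> hS; apply: (@sum_closed_pair a (fun=> 1)) => //; rewrite !scale1r. Qed.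

Lemma sum_closed_scale a (r S : PDO R n) (c : R) : 0 < c ->
  proj1_sig S = c%:C *: proj1_sig r -> (gamma a S <-> gamma a r).
Proof.
move=> c_gt0 hS.
have hw : wsum_is (Some 0%N) (fun=> c) (fun=> r) (proj1_sig S) by rewrite /= big_ord1.
have [Sa ra] := hsc a (fun i _ => c_gt0) hw.
by split=> [/Sa h | h]; [apply: (h 0%N) | apply: ra].
Qed.

Lemma sum_closed_scale_closed a : scale_closed_pdo (gamma a).
Proof. by move=> r S c ra c_gt0 hS; apply: (sum_closed_scale a c_gt0 hS).2. Qed.

Lemma sum_closed_down_closed a : down_closed_pdo (gamma a).
Proof.
move=> r S rS Sa; pose D : PDO R n := exist _ _ (pdo_subr (proj2_sig r) (proj2_sig S) rS).
have hS : proj1_sig S = proj1_sig r + proj1_sig D by rewrite /= addrC subrK.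
by have [/(_ Sa) []] := sum_closed_add a hS.
Qed.

Lemma sum_closed_convex a : convex_pdo (gamma a).
Proof.
move=> r1 r2 S t r1a r2a /andP [t0 t1] hS.
have [t_eq0 | t_neq0] := eqVneq t 0.
  apply: (sum_closed_scale a ltr01 _).2 r2a.
  by rewrite hS t_eq0 subr0 rmorph0 scale0r add0r.
have [t_eq1 | t_neq1] := eqVneq t 1.
  apply: (sum_closed_scale a ltr01 _).2 r1a.
  by rewrite hS t_eq1 subrr rmorph0 scale0r addr0.
apply: (@sum_closed_pair a (fun i => if i is 0%N then t else 1 - t) _ _ _ _ _ hS).2 => //.
  by rewrite lt_def t_neq0.
by rewrite subr_gt0 lt_def eq_sym t_neq1.
Qed.

Lemma sum_closed_omega_cpo a : omega_cpo_pdo (gamma a).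
Proof.
move=> rho S rho_a rho_incr S_lub; pose D := increments rho_incr.
have D_psum m : \sum_(i < m.+1) 1%:C *: proj1_sig (D i) = proj1_sig (rho m).
  elim: m => [|m IH]; first by rewrite big_ord1 scale1r.
  by rewrite big_ord_recr /= IH scale1r addrC subrK.
have hw : wsum_is None (fun=> 1) D (proj1_sig S).
  move=> e /(incr_lub_mx_cvg rho_incr S_lub) [N hN].
  by exists N.+1 => -[|k] // hk; rewrite D_psum; apply: hN.
apply: (hsc a (fun _ _ => ltr01) hw).2 => -[_ | k _]; first exact: rho_a.
have hr : proj1_sig (rho k.+1) = proj1_sig (rho k) + proj1_sig (D k.+1).
  by rewrite /= addrC subrK.
by have [/(_ (rho_a k.+1)) []] := sum_closed_add a hr.
Qed.

End SumClosedConditions.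

Lemma in_fam_le (K : option nat) i j : in_fam K j -> (i <= j)%N -> in_fam K i.
Proof. by case: K => //= k jk ij; apply: leq_trans ij jk. Qed.

Section PartialSums.
Variables (R : realType) (n : nat) (x : nat -> R) (rho : nat -> PDO R n).
Local Notation r i := (proj1_sig (rho i)).

Definition psum (m : nat) : 'M[R[i]]_(2 ^ n) := \sum_(i < m) (x i)%:C *: r i.

Lemma psumS m : psum m.+1 = psum m + (x m)%:C *: r m.
Proof. by rewrite /psum big_ord_recr. Qed.

Lemma psd_term i : 0 <= x i -> psd ((x i)%:C *: r i).
Proof. by move=> x_ge0; apply: psdZ; [rewrite ler0c | case: (proj2_sig (rho i))]. Qed.

Lemma psum_lowner m m' : (forall i, (i < m')%N -> 0 <= x i) ->
  (m <= m')%N -> lowner (psum m) (psum m').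
Proof.
elim: m' => [|k IH] x_ge0; first by rewrite leqn0 => /eqP ->; apply: lowner_refl.
rewrite leq_eqVlt => /orP [/eqP -> | /IH hm]; first exact: lowner_refl.
apply: lowner_trans (hm (fun i hi => x_ge0 i (ltnW hi))) _.
by rewrite /lowner psumS addrC addKr; apply/psd_term/x_ge0.
Qed.

Lemma psd_psum m : (forall i, (i < m)%N -> 0 <= x i) -> psd (psum m).
Proof.
move=> x_ge0; have := psum_lowner x_ge0 (leq0n m).
by rewrite /lowner /psum big_ord0 subr0.
Qed.

Section WeightedSum.
Variables (K : option nat) (S : 'M[R[i]]_(2 ^ n)).
Hypothesis hS : wsum_is K x rho S.
Hypothesis x_gt0 : forall i, in_fam K i -> 0 < x i.

Lemma psum_lowner_wsum m : in_fam K m -> lowner (psum m.+1) S.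
Proof.
case: K hS x_gt0 => [k|] /= hS' x_gt0' Km.
  by rewrite hS'; apply: psum_lowner => // i ik; apply/ltW/x_gt0'.
apply: (mx_cvg_lowner_lb (N := m.+1) hS') => k mk.
by apply: psum_lowner => // i _; apply/ltW/x_gt0'.
Qed.

Lemma term_lowner_wsum m : in_fam K m -> lowner ((x m)%:C *: r m) S.
Proof.
move=> Km; have := psum_lowner_wsum Km; rewrite /lowner psumS => hle.
have -> : S - (x m)%:C *: r m = S - (psum m + (x m)%:C *: r m) + psum m.
  by rewrite opprD addrA addrAC subrK.
apply: psdD hle (psd_psum _) => i im.
by apply/ltW/x_gt0/(in_fam_le Km)/ltnW.
Qed.

End WeightedSum.

(* [psum m.+2 = 2 (psum m.+1 / 2 + x_(m+1) rho_(m+1) / 2)]. *)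
Lemma psum_mem (P : set (PDO R n)) : convex_pdo P -> scale_closed_pdo P ->
  forall m (tau : PDO R n), (forall i, (i <= m)%N -> 0 < x i /\ P (rho i)) ->
  proj1_sig tau = psum m.+1 -> P tau.
Proof.
move=> P_conv P_scale; elim=> [|m IH] tau x_P tauE.
  have [x0 P0] := x_P 0%N (leqnn 0).
  by apply: P_scale P0 x0 _; rewrite tauE /psum big_ord1.
have x_ge0 i : (i < m.+2)%N -> 0 <= x i by move=> /x_P [/ltW].
have pdo_le B : psd B -> lowner B (psum m.+2) -> pdo B.
  by move=> B_psd B_le; apply: pdo_lowner B_psd B_le _; rewrite -tauE; apply: proj2_sig.
have [xm Pm] := x_P m.+1 (leqnn _).
pose t1 : PDO R n := exist _ _ (pdo_le _ (psd_psum (fun i im => x_ge0 i (ltnW im)))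
  (psum_lowner x_ge0 (leqnSn _))).
have t2_le : lowner ((x m.+1)%:C *: r m.+1) (psum m.+2).
  by rewrite /lowner psumS addrK; apply: psd_psum => i im; exact: x_ge0 (ltnW im).
pose t2 : PDO R n := exist _ _ (pdo_le _ (psd_term (ltW xm)) t2_le).
have half01 : 0 <= (2%:R^-1 : R) <= 1.
  by rewrite invr_ge0 ler0n invf_le1 ?ltr0n // ler1n.
pose U : PDO R n := exist _ _ (pdo_conv (proj2_sig t1) (proj2_sig t2) half01).
have PU : P U.
  apply: (@P_conv t1 t2 U _ _ _ half01 erefl).
    by apply: IH => // i im; apply/x_P/leqW.
  exact: (@P_scale _ t2 _ Pm xm erefl).
apply: (@P_scale U tau 2%:R PU (ltr0Sn _ 1)).
have half1 : 2%:R * 2%:R^-1 = 1 :> R by field.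
have half2 : 2%:R * (1 - 2%:R^-1) = 1 :> R by field.
by rewrite tauE psumS /= scalerDr !scalerA -!rmorphM half1 half2 mul1r rmorph1 !scale1r.
Qed.

End PartialSums.

Lemma closure_conditions_sum_closed (R : realType) (n : nat) (d : Order.disp_t)
    (A : porderType d) (gamma : A -> set (PDO R n)) :
  (forall a, [/\ convex_pdo (gamma a), omega_cpo_pdo (gamma a),
                 down_closed_pdo (gamma a) & scale_closed_pdo (gamma a)]) ->
  sum_closed gamma.
Proof.
move=> closure a K x rho S x_gt0 hS.
have [P_conv P_ocpo P_down P_scale] := closure a.
split=> [Sa i Ki | rho_a].
  have xr_le := term_lowner_wsum hS x_gt0 Ki.
  pose xr : PDO R n :=
    exist _ _ (pdo_lowner (psd_term rho (ltW (x_gt0 i Ki))) xr_le (proj2_sig S)).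
  have xra : gamma a xr by apply: (P_down xr S).
  apply: (@P_scale xr (rho i) (x i)^-1 xra); first by rewrite invr_gt0 x_gt0.
  by rewrite /= scalerA -rmorphM mulVf ?gt_eqF ?x_gt0 // scale1r.
have x_P m : in_fam K m -> forall i, (i <= m)%N -> 0 < x i /\ gamma a (rho i).
  by move=> Km i im; have Ki := in_fam_le Km im; split; [apply: x_gt0 | apply: rho_a].
case: K x_gt0 hS rho_a x_P => [k | ] x_gt0 hS rho_a x_P.
  exact: (psum_mem P_conv P_scale (x_P k (leqnn k)) hS).
have psum_pdo m : pdo (psum x rho m.+1).
  apply: pdo_lowner (psum_lowner_wsum hS x_gt0 (I : in_fam None m)) (proj2_sig S).
  by apply: psd_psum => i _; apply/ltW/x_gt0.
apply: (@P_ocpo (fun m => exist _ _ (psum_pdo m))).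
- by move=> m; apply: (psum_mem P_conv P_scale (x_P m I)).
- by move=> m; apply: psum_lowner => // i _; apply/ltW/x_gt0.
- split=> [m | tau ub]; first exact: (psum_lowner_wsum hS x_gt0 (I : in_fam None m)).
  exact: mx_cvg_lowner_ub (mx_cvg_shift hS) (fun k _ => ub k).
Qed.

Theorem mainTheorem1 (R : realType) (n : nat) (d : Order.disp_t)
  (A : porderType d) (alpha : set (PDO R n) -> A) (gamma : A -> set (PDO R n)) :
  complete_lattice A ->
  galois_embedding alpha gamma ->
  [<-> well_structured alpha gamma;
       sum_closed gamma;
       forall a : A,
         [/\ convex_pdo (gamma a), omega_cpo_pdo (gamma a),
             down_closed_pdo (gamma a) & scale_closed_pdo (gamma a)]].
Proof.
move=> _ embedding; have ws_sc := well_structured_sum_closedP embedding.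
split; [|split].
- exact: ws_sc.1.
- move=> sc a; split.
  + exact: sum_closed_convex.
  + exact: sum_closed_omega_cpo.
  + exact: sum_closed_down_closed.
  + exact: sum_closed_scale_closed.
- by move=> closure; apply/ws_sc/closure_conditions_sum_closed.
Qed.
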